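(* Let $\Omega$ be a distribution of $\Sigma$, $\mathsf{Obs}$ an observation function over $\Sigma$, and $(\sigma_N,P)\in\mathit{CED}(\Omega,\mathsf{Obs})$. (1) For every discrepancy $\delta\in\mathcal D(\sigma_N,P)$ and every $\sigma\in\mathsf{img}(P)$, $\sigma_N|_\delta\ne\sigma|_\delta$. Consequently there is no function $P':\Omega\cup\{\delta\}\to\mathsf{Dom}(\mathsf{Obs})$ extending $P$ with $P'(\delta)\in\mathsf{img}(P)$ such that $(\sigma_N,P')\in\mathit{CED}(\Omega\cup\{\delta\},\mathsf{Obs})$. (2) Conversely, let $\Omega'$ be any distribution of $\Sigma$ such that no $\delta\in\mathcal D(\sigma_N,P)$ is contained in any $\Sigma_j\in\Omega'$. Then for every $\Sigma_j\in\Omega'$ there is $\sigma\in\mathsf{img}(P)$ with $\sigma_N|_{\Sigma_j}=\sigma|_{\Sigma_j}$; hence there exists $P'':\Omega'\to\mathsf{img}(P)$ with $(\sigma_N,P'')\in\mathit{CED}(\Omega',\mathsf{Obs})$.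
   Context: $\sigma|_{\Sigma'}$ is the projection of a word onto $\Sigma'$ (subsequence of symbols in $\Sigma'$). A distribution of $\Sigma$ is a finite set of subsets of $\Sigma$ with union $\Sigma$. An observation function is a partial map $\mathsf{Obs}:\Sigma^\star\rightharpoonup\{+,-\}$ with finite domain. A counter-example to $\Omega\models\mathsf{Obs}$ is a pair $(\sigma_N,P)$ with $\sigma_N\in\mathsf{Dom}(\mathsf{Obs})$, $\mathsf{Obs}(\sigma_N)=-$, and $P:\Omega\to\mathsf{Dom}(\mathsf{Obs})$ such that for all $\Sigma_i\in\Omega$, $\mathsf{Obs}(P(\Sigma_i))=+$ and $\sigma_N|_{\Sigma_i}=P(\Sigma_i)|_{\Sigma_i}$; $\mathit{CED}(\Omega,\mathsf{Obs})$ is the set of these, and $\mathsf{img}(P)$ is the image of $P$. Discrepancies: for a word $w$ let $\Sigma^m(w)$ be the multiset of its symbols. For $\Sigma_i\in\Omega$, the multiplicity discrepancies are $\mathcal D_m^{\Sigma_i}(\sigma_N,P)=\{a\in\Sigma\mid a$ occurs a different number of times in $\sigma_N$ and in $P(\Sigma_i)\}$. Let $\theta=\Sigma\setminus\mathcal D_m^{\Sigma_i}(\sigma_N,P)$, $u=\sigma_N|_\theta$, $w=P(\Sigma_i)|_\theta$ (these are permutations of each other); let $\pi$ be the unique bijection of positions with $u[j]=w[\pi(j)]$ for all $j$ and such that $j<k$, $u[j]=u[k]$ imply $\pi(j)<\pi(k)$. The order discrepancies are $\mathcal D_o^{\Sigma_i}(\sigma_N,P)=\{\{u[j],u[k]\}\mid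 j<k,\ \pi(j)>\pi(k)\}$. A set $\delta\subseteq\Sigma$ is a discrepancy for $(\sigma_N,P)$ iff for every $\Sigma_i\in\Omega$, either $\delta\cap\mathcal D_m^{\Sigma_i}(\sigma_N,P)\neq\emptyset$ or some element of $\mathcal D_o^{\Sigma_i}(\sigma_N,P)$ is a subset of $\delta$; $\mathcal D(\sigma_N,P)$ is the set of all discrepancies. *)

From mathcomp Require Import all_boot finmap.
Set Implicit Arguments. Unset Strict Implicit. Unset Printing Implicit Defensive.
Local Open Scope fmap_scope.

Section Defs.
Variable Sigma : finType.

Definition proj (A : {set Sigma}) (w : seq Sigma) : seq Sigma :=
  [seq x <- w | x \in A].

Definition is_distribution (Omega : {set {set Sigma}}) : Prop :=
  \bigcup_(S in Omega) S = [set: Sigma].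

(* Observation functions: finite partial maps words -> {+,-}; true = +, false = - *)
Definition obs_fun := {fmap seq Sigma -> bool}.

Definition img (Omega : {set {set Sigma}}) (P : {set Sigma} -> seq Sigma)
  (s : seq Sigma) : Prop := exists2 Si, Si \in Omega & P Si = s.

(* (sN, P) \in CED(Omega, Obs); P is only relevant on Omega *)
Definition is_ced (Omega : {set {set Sigma}}) (Obs : obs_fun) (sN : seq Sigma)
  (P : {set Sigma} -> seq Sigma) : Prop :=
  Obs.[? sN] = Some false /\
  forall Si, Si \in Omega ->
    Obs.[? P Si] = Some true /\ proj Si sN = proj Si (P Si).

Definition Dm (sN w : seq Sigma) : {set Sigma} :=
  [set a | count_mem a sN != count_mem a w].

(* position (0-based) in w of the k-th (0-based) occurrence of a *)
Fixpoint occ_pos (a : Sigma) (k : nat) (w : seq Sigma) : nat :=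
  match w with
  | [::] => 0
  | x :: w' => if x == a then (if k is k'.+1 then (occ_pos a k' w').+1 else 0)
               else (occ_pos a k w').+1
  end.

(* pi(j) for position j of u carrying letter a: the position in w of the
   occurrence of a with the same rank as u[j] among occurrences of a in u *)
Definition pi_at (a : Sigma) (u w : seq Sigma) (j : nat) : nat :=
  occ_pos a (count_mem a (take j u)) w.

Definition order_disc (u w : seq Sigma) (a b : Sigma) : Prop :=
  exists j k, [/\ j < k, k < size u, nth a u j = a, nth b u k = b &
                 pi_at b u w k < pi_at a u w j].

Definition is_discrepancy (Omega : {set {set Sigma}}) (sN : seq Sigma)
  (P : {set Sigma} -> seq Sigma) (delta : {set Sigma}) : Prop :=
  forall Si, Si \in Omega ->
    let theta := ~: Dm sN (P Si) in
    (delta :&: Dm sN (P Si) != set0) \/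
    (exists a b, [/\ a \in delta, b \in delta &
                   order_disc (proj theta sN) (proj theta (P Si)) a b]).

End Defs.

(** A set [delta] is discrepant for a pair of words [(sN, w)] exactly when
    [sN] and [w] have different projections on [delta]: a multiplicity
    discrepancy inside [delta] separates the projections by counting, and an
    order discrepancy [{a, b}] inside [delta] survives projection on [delta],
    since projecting preserves the relative order of occurrences.
    Conversely, if the projections differ but no letter of [delta] has
    different multiplicities, the two projections are distinct permutations
    of each other and hence contain an inversion, which is an order
    discrepancy inside [delta].  For part (2), a block [Sj] of [Omega'] matched
    by no word of [img P] would itself be a discrepancy contained in [Sj]. *)

From mathcomp Require Import all_boot finmap.
Set Implicit Arguments. Unset Strict Implicit.

Section Discrepancies.
Variable Sigma : finType.
Implicit Types (A B delta : {set Sigma}) (s t w : seq Sigma) (a b x : Sigma).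

Lemma count_proj A x s :
  count_mem x (proj A s) = if x \in A then count_mem x s else 0.
Proof.
case: ifP => xA; last by apply/count_memPn; rewrite mem_filter xA.
by rewrite count_filter; apply: eq_count => y /=; case: (eqVneq y x) => // ->.
Qed.

Lemma projC A B s : proj A (proj B s) = proj B (proj A s).
Proof. by rewrite /proj -!filter_predI; apply: eq_filter => y /=; rewrite andbC. Qed.

Lemma proj_proj_sub A B s : A \subset B -> proj A (proj B s) = proj A s.
Proof.
move=> /subsetP sAB; rewrite /proj -filter_predI; apply: eq_filter => y /=.
by case yA: (y \in A); rewrite //= sAB.
Qed.

Lemma occ_posP a r t x0 : r < count_mem a t ->
  [/\ occ_pos a r t < size t, nth x0 t (occ_pos a r t) = a &
      count_mem a (take (occ_pos a r t) t) = r].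
Proof.
elim: t r => [|x t IHt] r //=.
case: (eqVneq x a) => [->|neq_xa] /=.
  case: r => [|r] //=.
  by rewrite add1n ltnS => /IHt [? ? ->]; rewrite eqxx.
by rewrite add0n => /IHt [? -> ->]; rewrite (negbTE neq_xa).
Qed.

Lemma occ_pos_rank a j t x0 : j < size t -> nth x0 t j = a ->
  occ_pos a (count_mem a (take j t)) t = j.
Proof.
elim: t j => [|x t IHt] [|j] //=; first by move=> _ <-; rewrite eqxx.
by rewrite ltnS => lt_j nth_j; case: (eqVneq x a) => _ /=; rewrite add0n IHt.
Qed.

Lemma ltn_occ_pos_proj A a b ra rb t : a \in A -> b \in A ->
  (occ_pos b rb (proj A t) < occ_pos a ra (proj A t)) =
  (occ_pos b rb t < occ_pos a ra t).
Proof.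
move=> aA bA; elim: t ra rb => [|x t IHt] ra rb //=.
case xA: (x \in A) => /=.
  by case: (x == a); case: (x == b); case: ra => [|ra]; case: rb => [|rb];
    rewrite //= ?ltnS IHt.
have [xa xb] : x != a /\ x != b.
  by split; apply: contraFneq xA => ->.
by rewrite (negbTE xa) (negbTE xb) ltnS IHt.
Qed.

Lemma inversion_of_count_eq s t :
  (forall x, count_mem x s = count_mem x t) -> s <> t ->
  exists a ra b rb, [/\ ra < count_mem a s, rb < count_mem b s,
    occ_pos a ra s < occ_pos b rb s & occ_pos b rb t < occ_pos a ra t].
Proof.
elim: s t => [|x s IHs] [|y t] eq_count neq_st //.
- by have := eq_count y; rewrite /= eqxx.
- by have := eq_count x; rewrite /= eqxx.
case: (eqVneq x y) => [eq_xy|neq_xy]; last first.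
  exists x, 0, y, 0; rewrite /= !eqxx [y == x]eq_sym (negbTE neq_xy) add1n.
  by split=> //; have := eq_count y; rewrite /= !eqxx (negbTE neq_xy) => ->.
subst y.
have eq_count_tail x' : count_mem x' s = count_mem x' t.
  by move/eqP: (eq_count x'); rewrite /= eqn_add2l => /eqP.
have [|a [ra [b [rb [lt_ra lt_rb lt_s lt_t]]]]] := IHs t eq_count_tail.
  by move=> eq_st; apply: neq_st; rewrite eq_st.
exists a, ((x == a) + ra), b, ((x == b) + rb).
rewrite /= !ltn_add2l; split => //;
  by case: (x == a); case: (x == b); rewrite /= ?add1n ?add0n ltnS.
Qed.

Definition discrepant delta sN w : Prop :=
  let theta := ~: Dm sN w in
  (delta :&: Dm sN w != set0) \/
  (exists a b, [/\ a \in delta, b \in delta &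
                 order_disc (proj theta sN) (proj theta w) a b]).

Lemma discrepant_proj_neq delta sN w :
  discrepant delta sN w -> proj delta sN <> proj delta w.
Proof.
move=> [/set0Pn[a /setIP[a_delta]] | [a [b [a_delta b_delta]]]] disc eq_proj.
  move: disc; rewrite inE => /negP; apply.
  by have := count_proj delta a sN; rewrite eq_proj count_proj a_delta => ->.
have [j [k [lt_jk lt_k nth_j nth_k]]] := disc.
set u := proj _ sN in lt_k nth_j nth_k *; set v := proj _ w.
have eq_proj_uv : proj delta u = proj delta v by rewrite !(projC delta) eq_proj.
rewrite /pi_at -(ltn_occ_pos_proj _ _ _ a_delta b_delta) -eq_proj_uv.
rewrite ltn_occ_pos_proj // (occ_pos_rank (ltn_trans lt_jk lt_k) nth_j).
by rewrite (occ_pos_rank lt_k nth_k) ltnNge ltnW.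
Qed.

Lemma proj_neq_discrepant A sN w :
  proj A sN <> proj A w -> discrepant A sN w.
Proof.
move=> neq_proj; have [|/negbNE/eqP noDm] := boolP (A :&: Dm sN w != set0).
  by left.
right; set theta := ~: Dm sN w.
have count_A x : x \in A -> count_mem x sN = count_mem x w.
  by move=> xA; have := in_set0 x; rewrite -noDm !inE xA /= => /negbFE/eqP.
have sA_theta : A \subset theta.
  by apply/subsetP => x xA; rewrite !inE negbK count_A.
have [|a [ra [b [rb [lt_ra lt_rb lt_s lt_t]]]]] :=
  inversion_of_count_eq (s := proj A sN) (t := proj A w) _ neq_proj.
  by move=> x; rewrite !count_proj; case: ifP => // /count_A.
have aA : a \in A by move: lt_ra; rewrite count_proj; case: ifP.
have bA : b \in A by move: lt_rb; rewrite count_proj; case: ifP.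
set u := proj theta sN; set v := proj theta w.
move: lt_ra lt_rb lt_s lt_t.
rewrite -(proj_proj_sub sN sA_theta) -(proj_proj_sub w sA_theta) -/u -/v.
rewrite !(ltn_occ_pos_proj (A := A)) // !(count_proj A) aA bA.
move=> lt_ra lt_rb lt_u lt_v.
have [_ nth_a rank_a] := occ_posP a lt_ra.
have [lt_b nth_b rank_b] := occ_posP b lt_rb.
exists a, b; split => //.
by exists (occ_pos a ra u), (occ_pos b rb u); rewrite /pi_at rank_a rank_b.
Qed.

Lemma discrepantE delta sN w :
  discrepant delta sN w <-> proj delta sN <> proj delta w.
Proof. by split; [apply: discrepant_proj_neq | apply: proj_neq_discrepant]. Qed.

Variables (Omega : {set {set Sigma}}) (sN : seq Sigma).
Variable P : {set Sigma} -> seq Sigma.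

Lemma discrepancy_proj_neq delta sigma :
  is_discrepancy Omega sN P delta -> img Omega P sigma ->
  proj delta sN <> proj delta sigma.
Proof. by move=> disc [Si SiO <-]; apply/discrepantE/disc. Qed.

Definition matching_block (Sj : {set Sigma}) : option {set Sigma} :=
  [pick Si in Omega | proj Sj sN == proj Sj (P Si)].

Lemma matching_blockP Sj : ~ is_discrepancy Omega sN P Sj ->
  exists2 Si, matching_block Sj = Some Si &
              Si \in Omega /\ proj Sj sN = proj Sj (P Si).
Proof.
rewrite /matching_block; case: pickP => [Si /andP[SiO /eqP eq_proj] _|nomatch].
  by exists Si.
case=> Si SiO; apply/discrepantE => eq_proj.
by have := nomatch Si; rewrite /= SiO eq_proj eqxx.
Qed.

End Discrepancies.

Theorem mainTheorem8 (Sigma : finType) (Omega : {set {set Sigma}})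
  (Obs : obs_fun Sigma) (sN : seq Sigma) (P : {set Sigma} -> seq Sigma) :
  is_distribution Omega ->
  is_ced Omega Obs sN P ->
  (* (1) *)
  ((forall delta : {set Sigma}, is_discrepancy Omega sN P delta ->
      (forall sigma, img Omega P sigma -> proj delta sN <> proj delta sigma) /\
      ~ (exists P' : {set Sigma} -> seq Sigma,
           [/\ (forall Si, Si \in Omega -> P' Si = P Si),
               img Omega P (P' delta) &
               is_ced (delta |: Omega) Obs sN P']))
  /\
  (* (2) *)
  (forall Omega' : {set {set Sigma}}, is_distribution Omega' ->
     (forall delta : {set Sigma}, is_discrepancy Omega sN P delta ->
        forall Sj, Sj \in Omega' -> ~~ (delta \subset Sj)) ->
     (forall Sj, Sj \in Omega' ->
        exists2 sigma, img Omega P sigma & proj Sj sN = proj Sj sigma) /\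
     (exists P'' : {set Sigma} -> seq Sigma,
        (forall Sj, Sj \in Omega' -> img Omega P (P'' Sj)) /\
        is_ced Omega' Obs sN P''))).
Proof.
move=> _ [obs_sN ced_P]; split.
  move=> delta disc; split=> [|[P' [_ img_delta [_ ced_P']]]].
    by move=> sigma; apply: discrepancy_proj_neq.
  have [_ eq_delta] := ced_P' delta (setU11 _ _).
  exact: discrepancy_proj_neq disc img_delta eq_delta.
move=> Omega' _ no_disc_in_block.
have matched Sj : Sj \in Omega' ->
    exists2 Si, matching_block Omega sN P Sj = Some Si &
                Si \in Omega /\ proj Sj sN = proj Sj (P Si).
  move=> SjO'; apply: matching_blockP => disc.
  by have := no_disc_in_block Sj disc Sj SjO'; rewrite subxx.
split.
  by move=> Sj /matched[Si _ [SiO eq_proj]]; exists (P Si) => //; exists Si.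
exists (fun Sj => P (odflt set0 (matching_block Omega sN P Sj))).
split=> [Sj /matched[Si -> [SiO _]]|]; first by exists Si.
split=> // Sj /matched[Si -> [SiO eq_proj]] /=.
by have [obs_Si _] := ced_P Si SiO.
Qed.
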